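(* For all real $(B,A)$ with $A\neq0$ (and $l=B/\omega\ge0$, $\mu=A/(2\omega)>0$), the unimodular normalized monodromy matrix $\widetilde M=e^{\pi il}M$ has real trace; equivalently $\operatorname{tr}\widetilde M=2\cos(\pi l)+e^{\pi il}c_0c_1\in\mathbb R$, i.e. $e^{\pi il}c_0c_1\in\mathbb R$.
   Context: Fix $\omega>0$; $l=B/\omega$, $\mu=A/(2\omega)$. System (L): $u'=z^{-2}\big(-(lz+\mu(1+z^2))u+\frac{z}{2i\omega}v\big)$, $v'=\frac{1}{2i\omega z}u$. Its projectivization $\Phi=v/u$ is the complexification (via $\Phi=e^{i\phi}$, $z=e^{i\tau}$) of $\frac{d\phi}{d\tau}=-\frac{\sin\phi}{\omega}+l+2\mu\cos\tau$. $F(z)=\operatorname{diag}(z^{-l}e^{\mu(1/z-z)},1)$; $S_\pm$ are sectors with vertex $0$ containing the closed upper/lower half-plane minus $0$, closures avoiding $i\mathbb R_\mp$, $S_-=\overline{S_+}$; $H_\pm$ are the unique invertible matrix functions holomorphic on $S_\pm$, $C^\infty$ on $\overline{S_\pm}\setminus\{\infty\}$, $H_\pm(0)=\mathrm{Id}$, transforming (L) into $\tilde u'=-z^{-2}(lz+\mu(1+z^2))\tilde u$, $\tilde v'=0$; $W_\pm=H_\pm F$ (branch on $S_-$ by counterclockwise continuation from $S_+$), $W_{+,1}=H_+F$ with branch continued counterclockwise from $S_-$. With $\Sigma_0\ni\mathbb R_-$, $\Sigma_1\ni\mathbb R_+$ the components of $S_+\cap S_-$: $W_-=W_+C_0$ on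 $\Sigma_0$, $W_{+,1}=W_-C_1$ on $\Sigma_1$, $C_0=\begin{pmatrix}1&c_0\\0&1\end{pmatrix}$, $C_1=\begin{pmatrix}1&0\\c_1&1\end{pmatrix}$. $M_N=\operatorname{diag}(e^{-2\pi il},1)$. The monodromy matrix of (L) along a counterclockwise circuit around $0$, in the basis $W_+$, is $M=M_NC_1^{-1}C_0^{-1}$, and $\widetilde M=e^{\pi il}M$. *)

From Stdlib Require Import Reals.
Open Scope R_scope.

Record Cpx := mkC { re : R ; im : R }.

Definition Czero : Cpx := mkC 0 0.
Definition Cone : Cpx := mkC 1 0.
Definition Ci : Cpx := mkC 0 1.
Definition RtoC (x : R) : Cpx := mkC x 0.
Definition Cadd (a b : Cpx) : Cpx := mkC (re a + re b) (im a + im b).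
Definition Copp (a : Cpx) : Cpx := mkC (- re a) (- im a).
Definition Cmul (a b : Cpx) : Cpx :=
  mkC (re a * re b - im a * im b) (re a * im b + im a * re b).
Definition Cinv (a : Cpx) : Cpx :=
  mkC (re a / (re a * re a + im a * im a)) (- im a / (re a * re a + im a * im a)).
Definition Cexpi (t : R) : Cpx := mkC (cos t) (sin t).

Definition has_cderiv (f : R -> Cpx) (t : R) (f' : Cpx) : Prop :=
  derivable_pt_lim (fun s => re (f s)) t (re f') /\
  derivable_pt_lim (fun s => im (f s)) t (im f').

Definition L_u (omega B A : R) (z u v : Cpx) : Cpx :=
  let l := B / omega in
  let mu := A / (2 * omega) in
  Cmul (Cinv (Cmul z z))
    (Cadd (Cmul (Copp (Cadd (Cmul (RtoC l) z)
                           (Cmul (RtoC mu) (Cadd Cone (Cmul z z))))) u)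
          (Cmul (Cmul z (Cinv (Cmul (mkC 0 2) (RtoC omega)))) v)).

Definition L_v (omega B A : R) (z u v : Cpx) : Cpx :=
  Cmul (Cinv (Cmul (Cmul (mkC 0 2) (RtoC omega)) z)) u.

(* (u,v) is a solution of (L) continued along the counterclockwise unit
   circle z = e^{i tau}: d/dtau [w(e^{i tau})] = i e^{i tau} w'(z). *)
Definition solves_L_on_circle (omega B A : R) (u v : R -> Cpx) : Prop :=
  forall tau : R,
    let z := Cexpi tau in
    has_cderiv u tau (Cmul (Cmul Ci z) (L_u omega B A z (u tau) (v tau))) /\
    has_cderiv v tau (Cmul (Cmul Ci z) (L_v omega B A z (u tau) (v tau))).

(* On the unit circle z = e^{i t} the system reads u' = -i theta'(t) u + a v, v' = a u with
   theta(t) = l t + 2 mu sin t and a = 1/(2 omega) real.  The Hermitian form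
   conj(u1) u2 - conj(v1) v2 is conserved, so the fundamental matrix is pseudo-unitary for
   diag(1,-1), and the Wronskian satisfies W e^{i theta} = const, so W(2 pi) = e^{-2 pi i l}.
   Pseudo-unitarity together with the value of the determinant forces
   v2(2 pi) = e^{-2 pi i l} conj(u1(2 pi)), hence
   e^{pi i l} tr M = e^{pi i l} u1 + conj(e^{pi i l} u1) is real. *)
From Stdlib Require Import Reals Lra Nsatz.
Open Scope R_scope.

Definition Cconj (z : Cpx) : Cpx := mkC (re z) (- im z).

Lemma Cpx_ext (z w : Cpx) : re z = re w -> im z = im w -> z = w.
Proof. destruct z, w; simpl; intros -> ->; reflexivity. Qed.

Ltac Cring :=
  apply Cpx_ext;
  unfold Cadd, Copp, Cmul, Cconj, RtoC, Ci, Czero, Cone, Cexpi; cbn [re im]; ring.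

Lemma derivable_pt_lim_zero_eq (f : R -> R) (a b : R) :
  (forall t, derivable_pt_lim f t 0) -> f a = f b.
Proof.
intros Hf.
pose (pr := fun t => exist (fun l => derivable_pt_lim f t l) 0 (Hf t) : derivable_pt f t).
destruct (Rtotal_order a b) as [Hab | [-> | Hba]]; [| reflexivity |].
- destruct (MVT_cor1 f a b pr Hab) as [c [Hc _]]; simpl in Hc; lra.
- destruct (MVT_cor1 f b a pr Hba) as [c [Hc _]]; simpl in Hc; lra.
Qed.

Lemma has_cderiv_zero_eq (f : R -> Cpx) (a b : R) :
  (forall t, has_cderiv f t Czero) -> f a = f b.
Proof.
intros Hf; apply Cpx_ext.
- apply (derivable_pt_lim_zero_eq (fun s => re (f s))); intro t; apply (Hf t).
- apply (derivable_pt_lim_zero_eq (fun s => im (f s))); intro t; apply (Hf t).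
Qed.

Lemma has_cderiv_ext (f : R -> Cpx) (t : R) (f' g' : Cpx) :
  has_cderiv f t f' -> f' = g' -> has_cderiv f t g'.
Proof. now intros H <-. Qed.

Lemma has_cderiv_add (f g : R -> Cpx) (t : R) (f' g' : Cpx) :
  has_cderiv f t f' -> has_cderiv g t g' ->
  has_cderiv (fun s => Cadd (f s) (g s)) t (Cadd f' g').
Proof.
intros [Hfr Hfi] [Hgr Hgi]; split; apply derivable_pt_lim_plus; assumption.
Qed.

Lemma has_cderiv_opp (f : R -> Cpx) (t : R) (f' : Cpx) :
  has_cderiv f t f' -> has_cderiv (fun s => Copp (f s)) t (Copp f').
Proof. intros [Hr Hi]; split; apply derivable_pt_lim_opp; assumption. Qed.

Lemma has_cderiv_conj (f : R -> Cpx) (t : R) (f' : Cpx) :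
  has_cderiv f t f' -> has_cderiv (fun s => Cconj (f s)) t (Cconj f').
Proof. intros [Hr Hi]; split; [exact Hr | apply derivable_pt_lim_opp; exact Hi]. Qed.

Lemma has_cderiv_mul (f g : R -> Cpx) (t : R) (f' g' : Cpx) :
  has_cderiv f t f' -> has_cderiv g t g' ->
  has_cderiv (fun s => Cmul (f s) (g s)) t (Cadd (Cmul f' (g t)) (Cmul (f t) g')).
Proof.
intros [Hfr Hfi] [Hgr Hgi]; unfold Cmul, Cadd; split; cbn [re im].
- replace (re f' * re (g t) - im f' * im (g t) + (re (f t) * re g' - im (f t) * im g'))
    with (re f' * re (g t) + re (f t) * re g' - (im f' * im (g t) + im (f t) * im g'))
    by ring.
  apply (derivable_pt_lim_minus (fun s => re (f s) * re (g s)) (fun s => im (f s) * im (g s)));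
    apply derivable_pt_lim_mult; assumption.
- replace (re f' * im (g t) + im f' * re (g t) + (re (f t) * im g' + im (f t) * re g'))
    with (re f' * im (g t) + re (f t) * im g' + (im f' * re (g t) + im (f t) * re g'))
    by ring.
  apply (derivable_pt_lim_plus (fun s => re (f s) * im (g s)) (fun s => im (f s) * re (g s)));
    apply derivable_pt_lim_mult; assumption.
Qed.

Lemma has_cderiv_Cexpi_comp (theta : R -> R) (t dtheta : R) :
  derivable_pt_lim theta t dtheta ->
  has_cderiv (fun s => Cexpi (theta s)) t (Cmul (mkC 0 dtheta) (Cexpi (theta t))).
Proof.
intros H; unfold Cexpi, Cmul; split; cbn [re im].
- replace (0 * cos (theta t) - dtheta * sin (theta t)) with (- sin (theta t) * dtheta) by ring.
  apply (derivable_pt_lim_comp theta cos); [exact H | apply derivable_pt_lim_cos].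
- replace (0 * sin (theta t) + dtheta * cos (theta t)) with (cos (theta t) * dtheta) by ring.
  apply (derivable_pt_lim_comp theta sin); [exact H | apply derivable_pt_lim_sin].
Qed.

Definition solves_circle_system (phase : R -> R) (a : R) (u v : R -> Cpx) : Prop :=
  forall t,
    has_cderiv u t (Cadd (Cmul (mkC 0 (- phase t)) (u t)) (Cmul (RtoC a) (v t))) /\
    has_cderiv v t (Cmul (RtoC a) (u t)).

Lemma Cinv_unit_sq (z : Cpx) :
  re z * re z + im z * im z = 1 -> Cinv (Cmul z z) = Cmul (Cconj z) (Cconj z).
Proof.
destruct z as [c s]; unfold Cinv, Cmul, Cconj; cbn [re im]; intros H.
assert (Hsq : (c * c - s * s) * (c * c - s * s) + (c * s + s * c) * (c * s + s * c) = 1)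
  by (replace 1 with ((c * c + s * s) * (c * c + s * s)) by (rewrite H; ring); ring).
rewrite Hsq; apply Cpx_ext; cbn [re im]; field.
Qed.

Lemma Cinv_scaled_i (w : R) (z : Cpx) :
  w <> 0 -> re z * re z + im z * im z = 1 ->
  Cinv (Cmul (Cmul (mkC 0 2) (RtoC w)) z) = Cmul (mkC 0 (- / (2 * w))) (Cconj z).
Proof.
destruct z as [c s]; cbn [re im]; intros Hw H.
unfold Cinv, Cmul, RtoC, Cconj; cbn [re im].
replace ((0 * w - 2 * 0) * c - (0 * 0 + 2 * w) * s) with (- (2 * w * s)) by ring.
replace ((0 * w - 2 * 0) * s + (0 * 0 + 2 * w) * c) with (2 * w * c) by ring.
replace (- (2 * w * s) * - (2 * w * s) + 2 * w * c * (2 * w * c))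
  with (4 * w * w * (c * c + s * s)) by ring.
rewrite H; apply Cpx_ext; cbn [re im]; field; exact Hw.
Qed.

Lemma Cinv_2i (w : R) : w <> 0 -> Cinv (Cmul (mkC 0 2) (RtoC w)) = mkC 0 (- / (2 * w)).
Proof. intros Hw; unfold Cinv, Cmul, RtoC; apply Cpx_ext; cbn [re im]; field; exact Hw. Qed.

Lemma Cexpi_unit (t : R) : re (Cexpi t) * re (Cexpi t) + im (Cexpi t) * im (Cexpi t) = 1.
Proof. cbn [re im Cexpi]; pose proof (sin2_cos2 t); unfold Rsqr in *; lra. Qed.

Lemma solves_L_on_circle_system (omega B A : R) (u v : R -> Cpx) :
  omega <> 0 -> solves_L_on_circle omega B A u v ->
  solves_circle_system (fun t => B / omega + 2 * (A / (2 * omega)) * cos t) (/ (2 * omega)) u v.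
Proof.
intros Hw Hsol t; destruct (Hsol t) as [Hu Hv]; split.
- eapply has_cderiv_ext; [exact Hu |].
  unfold L_u; rewrite Cinv_unit_sq by apply Cexpi_unit.
  rewrite Cinv_2i by exact Hw.
  pose proof (Cexpi_unit t) as Hunit; cbn [re im Cexpi] in Hunit.
  apply Cpx_ext; unfold Cadd, Copp, Cmul, Cconj, RtoC, Ci, Cone, Cexpi; cbn [re im];
    nsatz.
- eapply has_cderiv_ext; [exact Hv |].
  unfold L_v; rewrite Cinv_scaled_i by (exact Hw || apply Cexpi_unit).
  pose proof (Cexpi_unit t) as Hunit; cbn [re im Cexpi] in Hunit.
  apply Cpx_ext; unfold Cmul, Cconj, RtoC, Ci, Cexpi; cbn [re im]; nsatz.
Qed.

Definition hermitian_form (u1 v1 u2 v2 : R -> Cpx) (t : R) : Cpx :=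
  Cadd (Cmul (Cconj (u1 t)) (u2 t)) (Copp (Cmul (Cconj (v1 t)) (v2 t))).

Definition wronskian (u1 v1 u2 v2 : R -> Cpx) (t : R) : Cpx :=
  Cadd (Cmul (u1 t) (v2 t)) (Copp (Cmul (u2 t) (v1 t))).

Ltac cderiv_rules :=
  repeat first [ apply has_cderiv_add | apply has_cderiv_opp | apply has_cderiv_conj
               | apply has_cderiv_mul | apply has_cderiv_Cexpi_comp | eassumption ].

Section CircleSystem.

Variables (phase : R -> R) (a : R) (u1 v1 u2 v2 : R -> Cpx).
Hypothesis sol1 : solves_circle_system phase a u1 v1.
Hypothesis sol2 : solves_circle_system phase a u2 v2.

Lemma hermitian_form_const (s t : R) :
  hermitian_form u1 v1 u2 v2 s = hermitian_form u1 v1 u2 v2 t.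
Proof.
apply has_cderiv_zero_eq; intro x.
destruct (sol1 x) as [du1 dv1], (sol2 x) as [du2 dv2].
unfold hermitian_form; eapply has_cderiv_ext; [cderiv_rules | Cring].
Qed.

(* Liouville's formula: tr of the coefficient matrix is -i phase. *)
Lemma wronskian_phase_const (theta : R -> R) (s t : R) :
  (forall x, derivable_pt_lim theta x (phase x)) ->
  Cmul (wronskian u1 v1 u2 v2 s) (Cexpi (theta s)) =
  Cmul (wronskian u1 v1 u2 v2 t) (Cexpi (theta t)).
Proof.
intros dtheta; apply (has_cderiv_zero_eq (fun x => Cmul (wronskian u1 v1 u2 v2 x) (Cexpi (theta x)))).
intro x; destruct (sol1 x) as [du1 dv1], (sol2 x) as [du2 dv2].
unfold wronskian; eapply has_cderiv_ext; [cderiv_rules; apply dtheta | Cring].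
Qed.

End CircleSystem.

(* For [[p, q], [r, s]] pseudo-unitary for diag(1,-1), the inverse is the diag(1,-1)-conjugate
   of the adjoint; comparing its corner with that of the adjugate gives this. *)
Lemma pseudo_unitary_corner_eq (p q r s : Cpx) :
  Cadd (Cmul (Cconj p) p) (Copp (Cmul (Cconj r) r)) = Cone ->
  Cadd (Cmul (Cconj p) q) (Copp (Cmul (Cconj r) s)) = Czero ->
  s = Cmul (Cconj p) (Cadd (Cmul p s) (Copp (Cmul q r))).
Proof.
intros Hnorm Horth.
pose proof (f_equal re Hnorm) as Hn1; pose proof (f_equal im Hnorm) as Hn2.
pose proof (f_equal re Horth) as Ho1; pose proof (f_equal im Horth) as Ho2.
unfold Cadd, Copp, Cmul, Cconj, Cone, Czero in *; cbn [re im] in *.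
apply Cpx_ext; cbn [re im]; nsatz.
Qed.

Lemma im_Cexpi_mul_add_conj (x : R) (p d : Cpx) :
  Cmul d (Cexpi (2 * x)) = Cone ->
  im (Cmul (Cexpi x) (Cadd p (Cmul (Cconj p) d))) = 0.
Proof.
intros Hd.
pose proof (f_equal re Hd) as Hd1; pose proof (f_equal im Hd) as Hd2.
pose proof (sin2_cos2 x) as Hunit; unfold Rsqr in Hunit.
unfold Cadd, Cmul, Cconj, Cexpi, Cone in *; cbn [re im] in *.
rewrite cos_2a, sin_2a in *.
nsatz.
Qed.

Lemma derivable_pt_lim_phase_integral (l m x : R) :
  derivable_pt_lim (fun t => l * t + 2 * m * sin t) x (l + 2 * m * cos x).
Proof.
replace (l + 2 * m * cos x) with (l * 1 + 2 * m * cos x) by ring.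
apply (derivable_pt_lim_plus (fun t => l * t) (fun t => 2 * m * sin t)).
- apply derivable_pt_lim_scal, derivable_pt_lim_id.
- apply derivable_pt_lim_scal, derivable_pt_lim_sin.
Qed.

Theorem mainTheorem9 :
  forall (omega B A : R),
    0 < omega -> A <> 0 -> 0 <= B / omega -> 0 < A / (2 * omega) ->
    forall u1 v1 u2 v2 : R -> Cpx,
      solves_L_on_circle omega B A u1 v1 ->
      solves_L_on_circle omega B A u2 v2 ->
      u1 0 = Cone -> v1 0 = Czero -> u2 0 = Czero -> v2 0 = Cone ->
      im (Cmul (Cexpi (PI * (B / omega)))
               (Cadd (u1 (2 * PI)) (v2 (2 * PI)))) = 0.
Proof.
intros omega B A Homega _ _ _ u1 v1 u2 v2 L1 L2 Iu1 Iv1 Iu2 Iv2.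
set (l := B / omega); set (mu := A / (2 * omega)).
set (theta := fun t => l * t + 2 * mu * sin t).
assert (S1 := solves_L_on_circle_system omega B A u1 v1 ltac:(lra) L1).
assert (S2 := solves_L_on_circle_system omega B A u2 v2 ltac:(lra) L2).
assert (Hnorm : hermitian_form u1 v1 u1 v1 (2 * PI) = Cone).
{ rewrite (hermitian_form_const _ _ _ _ _ _ S1 S1 _ 0); unfold hermitian_form.
  rewrite Iu1, Iv1; Cring. }
assert (Horth : hermitian_form u1 v1 u2 v2 (2 * PI) = Czero).
{ rewrite (hermitian_form_const _ _ _ _ _ _ S1 S2 _ 0); unfold hermitian_form.
  rewrite Iu1, Iv1, Iu2, Iv2; Cring. }
assert (Hdet : Cmul (wronskian u1 v1 u2 v2 (2 * PI)) (Cexpi (2 * (PI * l))) = Cone).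
{ replace (2 * (PI * l)) with (theta (2 * PI)) by (unfold theta; rewrite sin_2PI; ring).
  rewrite (wronskian_phase_const _ _ _ _ _ _ S1 S2 theta _ 0)
    by (intro x; apply derivable_pt_lim_phase_integral).
  replace (theta 0) with 0 by (unfold theta; rewrite sin_0; ring).
  unfold wronskian; rewrite Iu1, Iv1, Iu2, Iv2; unfold Cexpi; rewrite cos_0, sin_0; Cring. }
rewrite (pseudo_unitary_corner_eq (u1 (2 * PI)) (u2 (2 * PI)) (v1 (2 * PI)) (v2 (2 * PI)) Hnorm Horth).
exact (im_Cexpi_mul_add_conj _ _ _ Hdet).
Qed.
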